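(* Let $T$ be a left-linear term rewriting system and let $\mathcal{A}$ be a reduction sequence of $T$ whose length is a countable ordinal. Then there exists a stepwise-or-normal proof term $\psi$ that denotes $\mathcal{A}$.
   Context: Setting. $T=(\Sigma,R)$: $\Sigma$ finite; each rule $\mu:l\to r$ has $l$ finite, non-variable, linear, variables of $r$ among those of $l$; terms are finite or infinite trees; $d(t,u)=0$ if $t=u$, else $2^{-k}$ with $k$ the least depth at which they differ. Reduction steps and sequences. A reduction step is $a=\langle t,p,\mu,\sigma\rangle$ with $t|_p=\sigma l$ for $\mu:l\to r$; $src(a)=t$, $tgt(a)=t[\sigma r]_p$, depth $|p|$. A reduction sequence is either the empty sequence $id_t$ (source $t$, length $0$) or a sequence $\langle a_\alpha\rangle_{\alpha<\beta}$, $\beta>0$, of steps such that $src(a_{\alpha+1})=tgt(a_\alpha)$ whenever $\alpha+1<\beta$, and for each limit $\beta_0<\beta$: $tgt(a_\alpha)$ converges as $\alpha\to\beta_0$, its limit is $src(a_{\beta_0})$, and for every $n$ there is $\beta'<\beta_0$ with depth of $a_\alpha$ $>n$ for $\beta'<\alpha<\beta_0$. Its length is $\beta$ and its source $src(a_0)$. Proof terms. $\Sigma^R$ extends $\Sigma$ by a symbol $\mu$ of arity $n$ per rule ($n$ distinct variables in $l$). A one-step is a closed term over $\Sigma^R$ with exactly one rule-symbol occurrence, at position $p$, say $\mu(t_1,..,t_n)$; its source replaces it by $l[t_1,..,t_n]$, its target by $r[t_1,..,t_n]$. Stepwise proof terms are one-steps, $\psi_1\cdot\psi_2$ with $tgt(\psi_1)=src(\psi_2)$,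 and infinite concatenations $\prod_{i<\omega}\psi_i=\psi_0\cdot(\psi_1\cdot\cdots)$ with $tgt(\psi_i)=src(\psi_{i+1})$ of stepwise proof terms (targets of infinite concatenations are $\lim_i tgt(\psi_i)$ when defined; sources are those of the first factor). Stepwise-or-normal: stepwise or a rule-free term of $\mathrm{Ter}^\infty(\Sigma)$ (whose source is itself). Number of steps $|\psi|$: $0$, $1$, $|\psi_1|+|\psi_2|$, $\sup_n(|\psi_0|+\dots+|\psi_n|)$ respectively; $\alpha$-th component $\psi[\alpha]$ for $\alpha<|\psi|$: $\psi[0]=\psi$ for one-steps, $(\psi_1\cdot\psi_2)[\alpha]=\psi_1[\alpha]$ if $\alpha<|\psi_1|$ else $\psi_2[\beta]$ with $|\psi_1|+\beta=\alpha$, $(\prod\psi_i)[\alpha]=\psi_k[\gamma]$ for the unique $k,\gamma$ with $\alpha=|\psi_0|+\dots+|\psi_{k-1}|+\gamma$, $\gamma<|\psi_k|$. Denotation. A one-step $\psi$ denotes a step $a=\langle t,p,\mu,\sigma\rangle$ iff $src(\psi)=t$, $tgt(\psi)=tgt(a)$, and the symbol of $\psi$ at $p$ is $\mu$. A stepwise-or-normal $\psi$ denotes a reduction sequence $\mathcal{A}$ iff $|\psi|$ equals the length of $\mathcal{A}$, $src(\psi)=src(\mathcal{A})$, and $\psi[\alpha]$ denotes the $\alpha$-th step of $\mathcal{A}$ for every $\alpha$ less than the length. *)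

From mathcomp Require Import all_boot.
Set Implicit Arguments.
Unset Strict Implicit.
Unset Printing Implicit Defensive.

(* Finite or infinite trees over a symbol type S with arity ar, given  *)
(* as partial maps from positions (seq nat) to symbols.                *)
Definition tree (S : Type) := seq nat -> option S.

Definition is_term (S : Type) (ar : S -> nat) (t : tree S) : Prop :=
  t [::] <> None /\
  forall (p : seq nat) (i : nat),
    t (rcons p i) <> None <-> exists s, t p = Some s /\ i < ar s.

Definition is_finite_tree (S : Type) (t : tree S) : Prop :=
  exists n, forall q : seq nat, n < size q -> t q = None.

Definition subtree (S : Type) (t : tree S) (p : seq nat) : tree S :=
  fun q => t (p ++ q).

Definition replace (S : Type) (t : tree S) (p : seq nat) (s : tree S) : tree S :=
  fun q => if take (size p) q == p then s (drop (size p) q) else t q.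

(* d(t,u) <= 2^-(n+1): t and u agree at all positions of depth <= n *)
Definition agree (S : Type) (n : nat) (t u : tree S) : Prop :=
  forall q : seq nat, size q <= n -> t q = u q.

Definition converges (S : Type) (ts : nat -> tree S) (t : tree S) : Prop :=
  forall n, exists N, forall i, N <= i -> agree n (ts i) t.

Section TRS.
Variable F : finType.
Variable arF : F -> nat.
Variable Rl : Type.
Variable rvars : Rl -> seq nat. (* the distinct variables of l, in a fixed order *)
Variable lhs rhs : Rl -> tree (F + nat). (* patterns; variables are inr x *)

Definition arP (s : F + nat) : nat := match s with inl f => arF f | inr _ => 0 end.
Definition rarity (mu : Rl) : nat := size (rvars mu).
Definition arR (s : F + Rl) : nat := match s with inl f => arF f | inr mu => rarity mu end.

Definition term := tree F.

Definition occurs (x : nat) (l : tree (F + nat)) : Prop :=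
  exists q, l q = Some (inr x).

Definition wf_trs : Prop :=
  forall mu : Rl,
    [/\ is_term arP (lhs mu) /\ is_finite_tree (lhs mu),
        (exists f, lhs mu [::] = Some (inl f)),
        (forall q1 q2 x, lhs mu q1 = Some (inr x) ->
                          lhs mu q2 = Some (inr x) -> q1 = q2),
        uniq (rvars mu) /\ (forall x, occurs x (lhs mu) <-> x \in rvars mu)
      & (is_term arP (rhs mu) /\ is_finite_tree (rhs mu)) /\
        (forall x, occurs x (rhs mu) -> occurs x (lhs mu))].

Fixpoint inst_aux (l : tree (F + nat)) (sigma : nat -> term) (acc q : seq nat)
  : option F :=
  match l acc with
  | Some (inr x) => sigma x q
  | Some (inl f) =>
      match q with
      | [::] => Some f
      | i :: q' => inst_aux l sigma (rcons acc i) q'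
      end
  | None => None
  end.
Definition inst (l : tree (F + nat)) (sigma : nat -> term) : term :=
  fun q => inst_aux l sigma [::] q.

Record step := Step { st_t : term; st_p : seq nat; st_mu : Rl; st_sigma : nat -> term }.

Definition valid_step (a : step) : Prop :=
  is_term arF (st_t a) /\
  subtree (st_t a) (st_p a) = inst (lhs (st_mu a)) (st_sigma a).

Definition step_tgt (a : step) : term :=
  replace (st_t a) (st_p a) (inst (rhs (st_mu a)) (st_sigma a)).

Definition strict_well_order (I : Type) (lt : I -> I -> Prop) : Prop :=
  [/\ (forall x, ~ lt x x),
      (forall x y z, lt x y -> lt y z -> lt x z),
      (forall x y, lt x y \/ x = y \/ lt y x)
    & well_founded lt].

Definition is_least (I : Type) (lt : I -> I -> Prop) (b : I) : Prop :=
  forall a, ~ lt a b.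

Definition is_succ (I : Type) (lt : I -> I -> Prop) (a b : I) : Prop :=
  lt a b /\ forall c, ~ (lt a c /\ lt c b).

Definition is_limit (I : Type) (lt : I -> I -> Prop) (b : I) : Prop :=
  (exists a, lt a b) /\ (forall a, lt a b -> exists c, lt a c /\ lt c b).

(* A reduction sequence with source t0, index order (I, lt) and steps A.
   If I is empty this is id_{t0}. *)
Definition is_redseq (I : Type) (lt : I -> I -> Prop) (t0 : term) (A : I -> step)
  : Prop :=
  [/\ strict_well_order lt /\ is_term arF t0,
      (forall a, valid_step (A a)),
      (forall a, is_least lt a -> st_t (A a) = t0),
      (forall a b, is_succ lt a b -> st_t (A b) = step_tgt (A a))
    & (forall b0, is_limit lt b0 ->
         (forall n, exists b', lt b' b0 /\
            forall a, lt b' a -> lt a b0 -> agree n (step_tgt (A a)) (st_t (A b0))) /\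
         (forall n, exists b', lt b' b0 /\
            forall a, lt b' a -> lt a b0 -> n < size (st_p (A a))))].

Definition countable_type (I : Type) : Prop :=
  exists g : I -> nat, forall x y, g x = g y -> x = y.

Definition strip (o : option (F + Rl)) : option F :=
  match o with Some (inl f) => Some f | _ => None end.

Definition onestep_at (psi : tree (F + Rl)) (p : seq nat) (mu : Rl) : Prop :=
  [/\ is_term arR psi, psi p = Some (inr mu)
    & forall q nu, psi q = Some (inr nu) -> q = p].

(* arguments t_1..t_n of mu(t_1..t_n), attached to the variables of l *)
Definition osubst (psi : tree (F + Rl)) (p : seq nat) (mu : Rl) : nat -> term :=
  fun x q => strip (psi (p ++ index x (rvars mu) :: q)).

Definition osrc (psi : tree (F + Rl)) (p : seq nat) (mu : Rl) : term :=
  replace (fun q => strip (psi q)) p (inst (lhs mu) (osubst psi p mu)).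
Definition otgt (psi : tree (F + Rl)) (p : seq nat) (mu : Rl) : term :=
  replace (fun q => strip (psi q)) p (inst (rhs mu) (osubst psi p mu)).

Inductive pt : Type :=
| One of tree (F + Rl)
| Cat of pt & pt
| Inf of (nat -> pt).

Fixpoint has_src (psi : pt) (t : term) : Prop :=
  match psi with
  | One phi => exists p mu, onestep_at phi p mu /\ t = osrc phi p mu
  | Cat a _ => has_src a t
  | Inf f => has_src (f 0) t
  end.

Fixpoint has_tgt (psi : pt) (t : term) : Prop :=
  match psi with
  | One phi => exists p mu, onestep_at phi p mu /\ t = otgt phi p mu
  | Cat _ b => has_tgt b t
  | Inf f => exists ts, (forall i, has_tgt (f i) (ts i)) /\ converges ts t
  end.

Fixpoint stepwise (psi : pt) : Prop :=
  match psi with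
  | One phi => exists p mu, onestep_at phi p mu
  | Cat a b => [/\ stepwise a, stepwise b & exists t, has_tgt a t /\ has_src b t]
  | Inf f => forall i, stepwise (f i) /\ exists t, has_tgt (f i) t /\ has_src (f i.+1) t
  end.

(* Components: psi[alpha] is located by the decomposition
   alpha = |psi_1| + beta  /  |psi_0|+...+|psi_{k-1}| + gamma;
   we record the path of choices (0/1 for binary, k for infinite). *)
Fixpoint comp_at (psi : pt) (q : seq nat) : option (tree (F + Rl)) :=
  match psi, q with
  | One phi, [::] => Some phi
  | Cat a _, 0 :: q' => comp_at a q'
  | Cat _ b, 1 :: q' => comp_at b q'
  | Inf f, i :: q' => comp_at (f i) q'
  | _, _ => None
  end.

(* lexicographic order on paths = the ordinal order of components *)
Fixpoint lexlt (u v : seq nat) : Prop :=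
  match u, v with
  | x :: u', y :: v' => x < y \/ (x = y /\ lexlt u' v')
  | [::], _ :: _ => True
  | _, _ => False
  end.

Inductive sn_pt : Type :=
| SW of pt
| NF of term.

Definition stepwise_or_normal (psi : sn_pt) : Prop :=
  match psi with
  | SW p => stepwise p
  | NF t => is_term arF t
  end.

Definition odenotes (phi : tree (F + Rl)) (a : step) : Prop :=
  (exists p mu, [/\ onestep_at phi p mu, osrc phi p mu = st_t a
                   & otgt phi p mu = step_tgt a]) /\
  phi (st_p a) = Some (inr (st_mu a)).

(* psi denotes the reduction sequence (I, lt, t0, A): same number of steps
   (an order isomorphism between the index well-order and the components
   of psi), same source, and psi[alpha] denotes A alpha. *)
Definition denotes (psi : sn_pt) (I : Type) (lt : I -> I -> Prop)
  (t0 : term) (A : I -> step) : Prop :=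
  match psi with
  | NF t => t = t0 /\ (I -> False)
  | SW p =>
      has_src p t0 /\
      exists f : I -> seq nat,
        [/\ (forall a, comp_at p (f a) <> None),
            (forall q, comp_at p q <> None -> exists a, f a = q),
            (forall a b, lt a b <-> lexlt (f a) (f b))
          & (forall a phi, comp_at p (f a) = Some phi -> odenotes phi (A a))]
  end.

End TRS.

From mathcomp Require Import all_boot.
From Stdlib Require Import Classical FunctionalExtensionality ClassicalEpsilon.
Set Implicit Arguments.
Unset Strict Implicit.
Unset Printing Implicit Defensive.

(* By well-founded induction on its right end b, every segment [a, b) of the
   reduction sequence is denoted by a stepwise proof term.  If the segment has a
   largest index m, append the one-step of the m-th step to a proof term for
   [a, m).  Otherwise, since the index order is countable, there is an
   omega-chain a = c_0 < c_1 < ... cofinal in [a, b); the infinite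
   concatenation of proof terms for the blocks [c_i, c_(i+1)) denotes [a, b),
   and its target exists because strong convergence at the limit b makes the
   sources of the c_i converge to the source of b.  The empty sequence is
   denoted by its source, a normal term. *)

Lemma term_prefix_defined (S : Type) (ar : S -> nat) (t : tree S) q r :
  is_term ar t -> t (q ++ r) <> None -> t q <> None.
Proof.
move=> [_ Ht]; elim/last_ind: r => [|r i IH]; first by rewrite cats0.
by rewrite -rcons_cat => /Ht [s [Hs _]]; apply: IH; rewrite Hs.
Qed.

Lemma subtree_is_term (S : Type) (ar : S -> nat) (t : tree S) p :
  is_term ar t -> t p <> None -> is_term ar (subtree t p).
Proof.
move=> [_ Ht] Hp; split; first by rewrite /subtree cats0.
by move=> q i; rewrite /subtree -rcons_cat; apply: Ht.
Qed.

Lemma agree_trans (S : Type) n (t1 t2 t3 : tree S) :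
  agree n t1 t2 -> agree n t2 t3 -> agree n t1 t3.
Proof. by move=> H12 H23 q Hq; rewrite H12 // H23. Qed.

Lemma agree_sym (S : Type) n (t1 t2 : tree S) : agree n t1 t2 -> agree n t2 t1.
Proof. by move=> H q Hq; rewrite H. Qed.

Section Patterns.
Variables (F : finType) (arF : F -> nat) (l : tree (F + nat)).
Hypothesis Hl : is_term (arP arF) l.

(* Variables have arity 0, so every proper prefix of a position of [l] carries a function symbol. *)
Lemma pattern_prefix_fun q k :
  l q <> None -> k < size q -> exists f, l (take k q) = Some (inl f).
Proof.
move=> Hq Hk.
have Etake : take k.+1 q = rcons (take k q) (nth 0 q k) by rewrite (take_nth 0 Hk).
have : l (take k.+1 q) <> None.
  by apply: (@term_prefix_defined _ _ _ _ (drop k.+1 q) Hl); rewrite cat_take_drop.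
by rewrite Etake => /(proj2 Hl) [[f|x] [Hs Hi]] //; exists f.
Qed.

Lemma inst_aux_cat (sg : nat -> term F) q acc r :
  (forall k, k < size q -> exists f, l (acc ++ take k q) = Some (inl f)) ->
  inst_aux l sg acc (q ++ r) = inst_aux l sg (acc ++ q) r.
Proof.
elim: q acc => [|i q IH] acc Hfun; first by rewrite cats0.
have [f Hf] := Hfun 0 erefl; rewrite take0 cats0 in Hf.
rewrite cat_cons /= Hf IH; first by rewrite cat_rcons.
by move=> k Hk; have [g Hg] := Hfun k.+1 Hk; exists g; rewrite cat_rcons.
Qed.

Lemma inst_var (sg : nat -> term F) q x r :
  l q = Some (inr x) -> inst l sg (q ++ r) = sg x r.
Proof.
move=> Hx; rewrite /inst (@inst_aux_cat _ q [::] r) /=; first by case: r => [|??] /=; rewrite Hx.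
by move=> k Hk; apply: pattern_prefix_fun => //; rewrite Hx.
Qed.

Lemma inst_fun (sg : nat -> term F) q f :
  l q = Some (inl f) -> inst l sg q = Some f.
Proof.
move=> Hf; rewrite /inst -(cats0 q) (@inst_aux_cat _ q [::] [::]) /= ?Hf //.
by move=> k Hk; apply: pattern_prefix_fun => //; rewrite Hf.
Qed.

Lemma eq_inst (s1 s2 : nat -> term F) :
  (forall x, occurs x l -> s1 x = s2 x) -> inst l s1 = inst l s2.
Proof.
move=> Hs; apply: functional_extensionality => q; rewrite /inst.
elim: q [::] => [|i q IH] acc /=;
  by case E: (l acc) => [[f|x]|] //; rewrite Hs //; exists acc.
Qed.

End Patterns.

Section OneStep.
Variables (F : finType) (arF : F -> nat) (Rl : Type) (rvars : Rl -> seq nat)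
  (lhs rhs : Rl -> tree (F + nat)).
Hypothesis HT : wf_trs arF rvars lhs rhs.

Lemma lhs_is_term mu : is_term (arP arF) (lhs mu).
Proof. by case: (HT mu) => [[]]. Qed.

Lemma lhs_root_fun mu : exists f, lhs mu [::] = Some (inl f).
Proof. by case: (HT mu). Qed.

Lemma occurs_lhs mu x : occurs x (lhs mu) <-> x \in rvars mu.
Proof. by case: (HT mu) => _ _ _ []. Qed.

Lemma occurs_rhs mu x : occurs x (rhs mu) -> occurs x (lhs mu).
Proof. by case: (HT mu) => _ _ _ _ [_]; apply. Qed.

(* [t] with the subterm at [p] replaced by [mu(sg x_1, ..., sg x_n)], where [x_j] is the j-th variable of [mu]. *)
Definition onestep_of (t : term F) (p : seq nat) (mu : Rl) (sg : nat -> term F)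
  : tree (F + Rl) := fun q =>
  if take (size p) q == p then
    match drop (size p) q with
    | [::] => Some (inr mu)
    | j :: r => if j < rarity rvars mu then omap inl (sg (nth 0 (rvars mu) j) r) else None
    end
  else omap inl (t q).

Lemma onestep_of_cat t p mu sg r : onestep_of t p mu sg (p ++ r) =
    match r with
    | [::] => Some (inr mu)
    | j :: r => if j < rarity rvars mu then omap inl (sg (nth 0 (rvars mu) j) r) else None
    end.
Proof. by rewrite /onestep_of take_size_cat // drop_size_cat // eqxx. Qed.

Lemma onestep_of_out t p mu sg q :
  take (size p) q != p -> onestep_of t p mu sg q = omap inl (t q).
Proof. by rewrite /onestep_of => /negbTE ->. Qed.

Lemma onestep_of_at t p mu sg : onestep_of t p mu sg p = Some (inr mu).
Proof. by have := onestep_of_cat t p mu sg [::]; rewrite cats0. Qed.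

Lemma strip_inl (u : option F) : strip (omap (@inl F Rl) u) = u.
Proof. by case: u. Qed.

Lemma omap_inl_defined (u : option F) : omap (@inl F Rl) u <> None <-> u <> None.
Proof. by case: u. Qed.

Lemma arR_inl_children (u : option F) i :
  (exists s, omap inl u = Some s /\ i < arR arF rvars s) <-> (exists s, u = Some s /\ i < arF s).
Proof.
case: u => [f|] /=; last by split => -[? []].
by split=> -[s [[<-] Hi]]; [exists f | exists (inl f)].
Qed.

Section Redex.
Variables (t : term F) (p : seq nat) (mu : Rl) (sg : nat -> term F).
Hypotheses (Ht : is_term arF t) (Hmatch : subtree t p = inst (lhs mu) sg).

Let phi := onestep_of t p mu sg.

Lemma redex_at q : t (p ++ q) = inst (lhs mu) sg q.
Proof. by rewrite -Hmatch. Qed.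

Lemma subst_is_term x : x \in rvars mu -> is_term arF (sg x).
Proof.
rewrite -occurs_lhs => -[qx Hqx].
have -> : sg x = subtree t (p ++ qx).
  apply: functional_extensionality => r.
  by rewrite /subtree -catA redex_at (inst_var (lhs_is_term mu) _ _ Hqx).
apply: subtree_is_term => //.
have [f0 Hf0] := lhs_root_fun mu.
case/lastP: qx Hqx => [|q' i] Hqx; first by rewrite Hqx in Hf0.
have [[g|y] [Hg Hi]] := proj1 (proj2 (lhs_is_term mu) q' i) ltac:(by rewrite Hqx) => //.
rewrite -rcons_cat; apply/(proj2 Ht); exists g.
by rewrite redex_at (inst_fun (lhs_is_term mu) _ Hg).
Qed.

Lemma inst_osubst_onestep_of (l : tree (F + nat)) :
  (forall x, occurs x l -> x \in rvars mu) ->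
  inst l (osubst rvars phi p mu) = inst l sg.
Proof.
move=> Hvars; apply: eq_inst => x /Hvars Hx; apply: functional_extensionality => r.
by rewrite /osubst /phi onestep_of_cat index_mem Hx strip_inl nth_index.
Qed.

Lemma onestep_of_is_term : is_term (arR arF rvars) phi.
Proof.
rewrite /phi; split.
  case E: (take (size p) [::] == p); last by rewrite onestep_of_out ?E //; case: (t [::]) (proj1 Ht).
  by move/eqP: E => /= <-; rewrite onestep_of_at.
move=> q i; case E: (take (size p) q == p).
  move/eqP: E => E; rewrite -(cat_take_drop (size p) q) E rcons_cat !onestep_of_cat.
  case: (drop (size p) q) => [|j r] /=.
    case Hi: (i < rarity rvars mu); last by split => // -[s [[<-]]]; rewrite /= Hi.
    split=> // _; first by exists (inr mu).
    by case: (sg _ [::]) (proj1 (subst_is_term (mem_nth 0 Hi))).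
  case Hj: (j < rarity rvars mu); last by split => // -[s []].
  rewrite arR_inl_children.
  exact: iff_trans (omap_inl_defined _) (proj2 (subst_is_term (mem_nth 0 Hj)) r i).
rewrite (@onestep_of_out t p mu sg q) ?E //.
case E2: (take (size p) (rcons q i) == p); last first.
  rewrite onestep_of_out ?E2 // arR_inl_children.
  exact: iff_trans (omap_inl_defined _) (proj2 Ht q i).
move/eqP: E2 => E2.
have : rcons q i = p ++ drop (size p) (rcons q i) by rewrite -[X in X ++ _]E2 cat_take_drop.
case/lastP: (drop (size p) (rcons q i)) => [|r k].
  rewrite cats0 => Ep; rewrite Ep onestep_of_at; split => // _.
  have /(proj2 Ht) [s [Hs Hsi]] : t (rcons q i) <> None.
    by rewrite Ep -(cats0 p) redex_at; have [f0 Hf0] := lhs_root_fun mu; rewrite /inst /= Hf0.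
  by exists (inl s); rewrite Hs.
by rewrite -rcons_cat => /rcons_inj [Eq _]; rewrite Eq take_size_cat // eqxx in E.
Qed.

Lemma onestep_of_onestep_at : onestep_at arF rvars phi p mu.
Proof.
split; [exact: onestep_of_is_term | exact: onestep_of_at |].
move=> q nu; case E: (take (size p) q == p); last by rewrite /phi onestep_of_out ?E //; case: (t q).
move/eqP: E => E; rewrite /phi -(cat_take_drop (size p) q) E onestep_of_cat.
case: (drop (size p) q) => [|j r]; first by rewrite cats0.
by case: ifP => // _; case: (sg _ r).
Qed.

Lemma osrc_onestep_of : osrc rvars lhs phi p mu = t.
Proof.
apply: functional_extensionality => q.
rewrite /osrc /replace inst_osubst_onestep_of => [|x]; last by rewrite occurs_lhs.
case: ifP => E; last by rewrite /phi onestep_of_out ?E // strip_inl.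
by move/eqP: E => E; rewrite -redex_at -{1}E cat_take_drop.
Qed.

Lemma otgt_onestep_of : otgt rvars rhs phi p mu = replace t p (inst (rhs mu) sg).
Proof.
apply: functional_extensionality => q.
rewrite /otgt /replace inst_osubst_onestep_of => [|x /occurs_rhs]; last by rewrite occurs_lhs.
by case: ifP => E //; rewrite /phi onestep_of_out ?E // strip_inl.
Qed.

End Redex.

Definition step_proof (a : step F Rl) : tree (F + Rl) :=
  onestep_of (st_t a) (st_p a) (st_mu a) (st_sigma a).

Section ValidStep.
Variable a : step F Rl.
Hypothesis Ha : valid_step arF lhs a.

Lemma step_proof_spec : [/\ onestep_at arF rvars (step_proof a) (st_p a) (st_mu a),
   osrc rvars lhs (step_proof a) (st_p a) (st_mu a) = st_t a
 & otgt rvars rhs (step_proof a) (st_p a) (st_mu a) = step_tgt rhs a].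
Proof.
case: Ha => Ht Hm; split; [exact: onestep_of_onestep_at | exact: osrc_onestep_of |].
exact: otgt_onestep_of.
Qed.

Lemma step_proof_denotes : odenotes arF rvars lhs rhs (step_proof a) a.
Proof.
split; last exact: onestep_of_at.
by case: step_proof_spec => *; exists (st_p a), (st_mu a).
Qed.

Lemma step_proof_stepwise : stepwise arF rvars lhs rhs (One (step_proof a)).
Proof. by case: step_proof_spec => *; exists (st_p a), (st_mu a). Qed.

Lemma step_proof_src : has_src arF rvars lhs (One (step_proof a)) (st_t a).
Proof. by case: step_proof_spec => *; exists (st_p a), (st_mu a). Qed.

Lemma step_proof_tgt : has_tgt arF rvars rhs (One (step_proof a)) (step_tgt rhs a).
Proof. by case: step_proof_spec => *; exists (st_p a), (st_mu a). Qed.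

End ValidStep.

End OneStep.

Section StrictWellOrder.
Variables (I : Type) (lt : I -> I -> Prop).
Hypothesis Hwo : strict_well_order lt.

Definition lte x y := lt x y \/ x = y.

Lemma lt_irrefl x : ~ lt x x.
Proof. by case: Hwo. Qed.

Lemma lt_trans x y z : lt x y -> lt y z -> lt x z.
Proof. by case: Hwo => _ H _ _; apply: H. Qed.

Lemma lt_total x y : lt x y \/ x = y \/ lt y x.
Proof. by case: Hwo. Qed.

Lemma lt_lte_asym x y : lt x y -> lte y x -> False.
Proof. by move=> Hxy [Hyx|Eyx]; apply: (@lt_irrefl x); [apply: lt_trans Hyx | rewrite -{2}Eyx]. Qed.

Lemma nlt_lte x y : ~ lt x y -> lte y x.
Proof. by case: (lt_total x y) => [//|[->|H] _]; [right | left]. Qed.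

Lemma lte_lt_trans x y z : lte x y -> lt y z -> lt x z.
Proof. by case=> [Hxy|->] // Hyz; apply: lt_trans Hyz. Qed.

Lemma lt_lte_trans x y z : lt x y -> lte y z -> lt x z.
Proof. by move=> Hxy [Hyz|<-] //; apply: lt_trans Hyz. Qed.

Lemma lte_trans x y z : lte x y -> lte y z -> lte x z.
Proof. by move=> [Hxy|->] // Hyz; left; apply: lt_lte_trans Hyz. Qed.

Lemma exists_least (x : I) : exists m, is_least lt m.
Proof.
case: Hwo => _ _ _ Hwf; elim/(well_founded_ind Hwf): x => x IH.
case: (classic (exists y, lt y x)) => [[y /IH //]|Hmin].
by exists x => y Hy; apply: Hmin; exists y.
Qed.

(* Segments [a, b) of the order, where the bound [None] stands for the end of the order. *)
Definition below (x : I) (b : option I) : Prop := if b is Some y then lt x y else True.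

Definition inseg (a : I) (b : option I) (x : I) : Prop := lte a x /\ below x b.

Definition bound_lt (u v : option I) : Prop := if u is Some x then below x v else False.

Lemma below_trans x y b : lt x y -> below y b -> below x b.
Proof. by case: b => //= z; apply: lt_trans. Qed.

Lemma bound_lt_wf : well_founded bound_lt.
Proof.
have Hsome x : Acc bound_lt (Some x).
  case: Hwo => _ _ _ Hwf; elim/(well_founded_ind Hwf): x => x IH.
  by constructor=> -[y|] Hy; [apply: IH | case: Hy].
case=> [x|]; first exact: Hsome.
by constructor=> -[y|] Hy; [apply: Hsome | case: Hy].
Qed.

Section Chain.
Variable c : nat -> I.
Hypothesis c_incr : forall n, lt (c n) (c n.+1).

Lemma chain_lt i j : i < j -> lt (c i) (c j).
Proof.
elim: j => // j IH; rewrite ltnS leq_eqVlt => /orP [/eqP -> //|Hij].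
exact: lt_trans (IH Hij) (c_incr j).
Qed.

Lemma chain_lte i j : i <= j -> lte (c i) (c j).
Proof. by rewrite leq_eqVlt => /orP [/eqP ->|/chain_lt]; [right | left]. Qed.

Lemma chain_block_lt i j x y : i < j ->
  inseg (c i) (Some (c i.+1)) x -> inseg (c j) (Some (c j.+1)) y -> lt x y.
Proof. by move=> Hij [_ Hx] [Hy _]; apply: lt_lte_trans Hx (lte_trans (chain_lte Hij) Hy). Qed.

Lemma chain_block_unique i j y :
  inseg (c i) (Some (c i.+1)) y -> inseg (c j) (Some (c j.+1)) y -> i = j.
Proof.
move=> Hi Hj; case: (ltngtP i j) => // Hij; exfalso.
- by apply: (@lt_irrefl y); apply: chain_block_lt Hij Hi Hj.
- by apply: (@lt_irrefl y); apply: chain_block_lt Hij Hj Hi.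
Qed.

Lemma chain_block_exists y n :
  lte (c 0) y -> lt y (c n) -> exists i, inseg (c i) (Some (c i.+1)) y.
Proof.
move=> H0; elim: n => [/lt_lte_asym /(_ H0) //|n IH Hyn].
case: (classic (lt y (c n))) => [/IH //|/nlt_lte Hny].
by exists n.
Qed.

End Chain.

(* The chain element [c (n+1)] is chosen above the element coded by [n] (if any), hence the chain is cofinal. *)
Lemma countable_cofinal_chain a b (g : I -> nat) :
  (forall x y, g x = g y -> x = y) -> inseg a b a ->
  (forall m, inseg a b m -> exists x, inseg a b x /\ lt m x) ->
  exists c : nat -> I, [/\ c 0 = a, forall n, inseg a b (c n),
    forall n, lt (c n) (c n.+1) & forall y, inseg a b y -> lt y (c (g y).+1)].
Proof.
move=> ginj Ha Hnomax.
pose next_ok (m : I) (n : nat) (x : I) :=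
  [/\ inseg a b x, lt m x & forall y, inseg a b y -> g y = n -> lt y x].
have Hnext (mn : I * nat) : exists x, inseg a b mn.1 -> next_ok mn.1 mn.2 x.
  case: mn => m n /=; case: (classic (inseg a b m)) => Hm; last by exists a.
  case: (classic (exists y, inseg a b y /\ g y = n)) => [[y [Hy Hgy]]|Hno].
  - have [z Hmz Hyz] : exists2 z, lte m z & lte y z /\ inseg a b z.
      case: (lt_total m y) => [Hmy|[<-|Hym]].
      - by exists y; [left | split; [right|]].
      - by exists m; [right | split; [right|]].
      - by exists m; [right | split; [left|]].
    have [x [Hx Hzx]] := Hnomax z (proj2 Hyz).
    exists x => _; split => //; first exact: lte_lt_trans Hmz Hzx.
    move=> y' _ Hgy'; have -> : y' = y by apply: ginj; rewrite Hgy Hgy'.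
    exact: lte_lt_trans (proj1 Hyz) Hzx.
  - have [x [Hx Hmx]] := Hnomax m Hm.
    by exists x => _; split => // y Hy Hgy; case: Hno; exists y.
have [next Hnext_ok] := choice _ Hnext.
pose c := fix c n := if n is n'.+1 then next (c n', n') else a.
have Hc n : inseg a b (c n) /\ next_ok (c n) n (c n.+1).
  elim: n => [|n [_ [Hn _ _]]]; first by split; [|apply: (Hnext_ok (a, 0))].
  by split; [|apply: (Hnext_ok (c n.+1, n.+1))].
exists c; split=> // [n|n|y Hy]; first by case: (Hc n).
- by case: (proj2 (Hc n)).
- by case: (proj2 (Hc (g y))) => _ _; apply.
Qed.

End StrictWellOrder.

Section Denotation.
Variables (F : finType) (arF : F -> nat) (Rl : Type) (rvars : Rl -> seq nat)
  (lhs rhs : Rl -> tree (F + nat)).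
Hypothesis HT : wf_trs arF rvars lhs rhs.
Variables (I : Type) (lt : I -> I -> Prop) (t0 : term F) (A : I -> step F Rl).
Hypothesis HA : is_redseq arF lhs rhs lt t0 A.

Let Hwo : strict_well_order lt.
Proof. by case: HA => -[]. Qed.

Let Hvalid x : valid_step arF lhs (A x).
Proof. by case: HA. Qed.

Let Hsucc [x y] : is_succ lt x y -> st_t (A y) = step_tgt rhs (A x).
Proof. by case: HA => _ _ _ H _; apply: H. Qed.

Let Hlimit [b] : is_limit lt b -> forall n, exists b', lt b' b /\
  forall x, lt b' x -> lt x b -> agree n (step_tgt rhs (A x)) (st_t (A b)).
Proof. by case: HA => _ _ _ _ H /H []. Qed.

(* A source is the target of the preceding step, or at a limit index a limit of earlier targets; either way, close to [cc] it is close to the targets converging to the source of [cc]. *)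
Lemma limit_sources_close cc : is_limit lt cc -> forall n, exists2 b, lt b cc &
  forall y, lt b y -> lt y cc -> agree n (st_t (A y)) (st_t (A cc)).
Proof.
move=> Hcc n; have [b' [Hb' Hagree]] := Hlimit Hcc n.
have [b [Hb'b Hbcc]] := proj2 Hcc b' Hb'.
exists b => // y Hby Hycc.
case: (classic (exists x, is_succ lt x y)) => [[x Hx]|Hnsucc].
  rewrite (Hsucc Hx); apply: Hagree; last exact: (lt_trans Hwo) (proj1 Hx) Hycc.
  case: (lt_total Hwo x b) => [Hxb|[->//|Hbx]]; last exact: (lt_trans Hwo) Hb'b Hbx.
  by case: (proj2 Hx b).
have Hy : is_limit lt y.
  split=> [|x Hxy]; first by exists b.
  apply: NNPP => Hno; apply: Hnsucc; exists x; split => // z [Hxz Hzy].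
  by apply: Hno; exists z.
have [by_ [Hby_ Hagree_y]] := Hlimit Hy n.
have [m [Hbm Hby_m Hmy]] : exists m, [/\ lte lt b m, lte lt by_ m & lt m y].
  case: (lt_total Hwo by_ b) => [H|[->|H]].
  - by exists b; split=> //; [right | left].
  - by exists b; split=> //; right.
  - by exists by_; split=> //; [left | right].
have [z [Hmz Hzy]] := proj2 Hy m Hmy.
apply: (@agree_trans _ _ _ (step_tgt rhs (A z))).
  by apply/agree_sym/Hagree_y => //; apply: (lte_lt_trans Hwo) Hby_m Hmz.
apply: Hagree; last exact: (lt_trans Hwo) Hzy Hycc.
exact: (lt_trans Hwo) Hb'b (lte_lt_trans Hwo Hbm Hmz).
Qed.

Lemma chain_sources_converge cc (c : nat -> I) :
  (forall n, lt (c n) (c n.+1)) -> (forall n, lt (c n) cc) ->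
  (forall y, lt y cc -> exists n, lt y (c n)) ->
  converges (fun n => st_t (A (c n))) (st_t (A cc)).
Proof.
move=> c_incr Hbelow Hcof n.
have Hcc : is_limit lt cc.
  split=> [|x /Hcof [k Hk]]; first by exists (c 0).
  by exists (c k).
have [b Hbcc Hclose] := limit_sources_close Hcc n.
have [N HN] := Hcof b Hbcc.
exists N => i Hi; apply: Hclose => //.
exact: (lt_lte_trans Hwo) HN (chain_lte Hwo c_incr Hi).
Qed.

Record denotes_seg (a : I) (b : option I) (psi : pt F Rl) (f : I -> seq nat) : Prop := {
  seg_stepwise : stepwise arF rvars lhs rhs psi;
  seg_src : has_src arF rvars lhs psi (st_t (A a));
  seg_tgt : forall c, b = Some c -> has_tgt arF rvars rhs psi (st_t (A c));
  seg_def : forall x, inseg lt a b x -> comp_at psi (f x) <> None;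
  seg_sur : forall q, comp_at psi q <> None -> exists x, inseg lt a b x /\ f x = q;
  seg_ord : forall x y, inseg lt a b x -> inseg lt a b y -> (lt x y <-> lexlt (f x) (f y));
  seg_den : forall x phi, inseg lt a b x -> comp_at psi (f x) = Some phi ->
             odenotes arF rvars lhs rhs phi (A x) }.

Lemma succ_of_max a b m c : inseg lt a b m -> (forall x, inseg lt a b x -> lte lt x m) ->
  b = Some c -> is_succ lt m c.
Proof.
move=> [Ham Hmc] Hmax Eb; subst b; split=> // z [Hmz Hzc].
apply: (lt_lte_asym Hwo Hmz); apply: Hmax; split=> //.
by left; apply: (lte_lt_trans Hwo) Ham Hmz.
Qed.

Lemma denotes_seg_single a b : inseg lt a b a -> (forall x, inseg lt a b x -> lte lt x a) ->
  denotes_seg a b (One (step_proof rvars (A a))) (fun _ => [::]).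
Proof.
move=> Ha Hmax.
have Honly x : inseg lt a b x -> x = a.
  move=> Hx; case: (Hmax x Hx) => // Hxa; case: (lt_lte_asym Hwo Hxa (proj1 Hx)).
split=> [|||x _ //|[|??] //= _|x y Hx Hy|x phi Hx [<-]].
- exact: (step_proof_stepwise HT) (Hvalid a).
- exact: (step_proof_src HT) (Hvalid a).
- by move=> c Ec; rewrite (Hsucc (succ_of_max Ha Hmax Ec)); apply: (step_proof_tgt HT) (Hvalid a).
- by exists a.
- by rewrite (Honly _ Hx) (Honly _ Hy); split=> // /(lt_irrefl Hwo); apply.
- by rewrite (Honly _ Hx); apply: (step_proof_denotes HT) (Hvalid a).
Qed.

Lemma denotes_seg_snoc a b m psi f :
  inseg lt a b m -> (forall x, inseg lt a b x -> lte lt x m) -> lt a m ->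
  denotes_seg a (Some m) psi f ->
  denotes_seg a b (Cat psi (One (step_proof rvars (A m))))
    (fun x => if excluded_middle_informative (x = m) then [:: 1] else 0 :: f x).
Proof.
move=> Hm Hmax Ham S.
set f' := fun x => _.
have f'm : f' m = [:: 1] by rewrite /f'; case: excluded_middle_informative.
have f'x x : x <> m -> f' x = 0 :: f x by rewrite /f'; case: excluded_middle_informative.
have Hbefore x : inseg lt a b x -> x <> m -> inseg lt a (Some m) x.
  by move=> [Hax Hxb] Hxm; split=> //; case: (Hmax x (conj Hax Hxb)).
have Hafter x : inseg lt a (Some m) x -> inseg lt a b x /\ x <> m.
  move=> [Hax Hxm]; split; first by split=> //; apply: below_trans Hxm (proj2 Hm).
  by move=> Exm; subst x; apply: (lt_irrefl Hwo) m Hxm.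
split.
- split; [exact: seg_stepwise S | exact: (step_proof_stepwise HT) (Hvalid m) |].
  by exists (st_t (A m)); split; [apply: (seg_tgt S) | apply: (step_proof_src HT) (Hvalid m)].
- exact: seg_src S.
- by move=> c Ec /=; rewrite (Hsucc (succ_of_max Hm Hmax Ec)); apply: (step_proof_tgt HT) (Hvalid m).
- move=> x Hx; case: (excluded_middle_informative (x = m)) => [->|Exm]; first by rewrite f'm.
  by rewrite f'x //=; apply: seg_def S _ (Hbefore _ Hx Exm).
- move=> [|[|[|k]] q] //= Hq; last by case: q Hq => //= _; exists m; split; [|rewrite f'm].
  have [x [Hx <-]] := seg_sur S Hq; have [Hx' Exm] := Hafter _ Hx.
  by exists x; rewrite f'x.
- move=> x y Hx Hy.
  case: (excluded_middle_informative (x = m)) => [->|Exm];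
    case: (excluded_middle_informative (y = m)) => [->|Eym].
  + by rewrite f'm; split=> [/(lt_irrefl Hwo)|/= [|[]]].
  + rewrite f'm f'x //=; split=> [Hmy|[|[]]] //.
    by case: (lt_lte_asym Hwo Hmy (Hmax _ Hy)).
  + rewrite f'm f'x //=; split=> _; first by left.
    by case: (Hmax _ Hx) => // /Exm.
  + rewrite !f'x //= (seg_ord S (Hbefore _ Hx Exm) (Hbefore _ Hy Eym)).
    by split=> [Hxy|[//|[]]] //; right.
- move=> x phi Hx; case: (excluded_middle_informative (x = m)) => [->|Exm].
    by rewrite f'm => -[<-]; apply: (step_proof_denotes HT) (Hvalid m).
  by rewrite f'x //=; apply: seg_den S _ _ (Hbefore _ Hx Exm).
Qed.

Lemma denotes_seg_limit a b (g : I -> nat) :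
  (forall x y, g x = g y -> x = y) -> below lt a b ->
  (forall m, inseg lt a b m -> exists x, inseg lt a b x /\ lt m x) ->
  (forall c, inseg lt a b c -> forall a', lt a' c -> exists psi f, denotes_seg a' (Some c) psi f) ->
  exists psi f, denotes_seg a b psi f.
Proof.
move=> ginj Hab Hnomax IH.
have Ha : inseg lt a b a by split; [right|].
have [c [c0 Hc c_incr Hcof]] := countable_cofinal_chain Hwo ginj Ha Hnomax.
have Hblock i y : inseg lt (c i) (Some (c i.+1)) y -> inseg lt a b y.
  move=> [Hcy Hyc]; split; last exact: below_trans Hyc (proj2 (Hc i.+1)).
  by rewrite -c0; apply: (lte_trans Hwo) (chain_lte Hwo c_incr (leq0n i)) Hcy.
have Hblocks y : exists i, inseg lt a b y -> inseg lt (c i) (Some (c i.+1)) y.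
  case: (classic (inseg lt a b y)) => [Hy|]; last by exists 0.
  have [|i Hi] := chain_block_exists Hwo _ (Hcof y Hy); first by rewrite c0; case: Hy.
  by exists i.
have [idx Hidx] := choice _ Hblocks.
have Hpieces i : exists pf : pt F Rl * (I -> seq nat),
    denotes_seg (c i) (Some (c i.+1)) pf.1 pf.2.
  by have [psi [f S]] := IH _ (Hc i.+1) _ (c_incr i); exists (psi, f).
have [pf Hpf] := choice _ Hpieces.
exists (Inf (fun i => (pf i).1)), (fun y => idx y :: (pf (idx y)).2 y); split.
- move=> i; split; first exact: seg_stepwise (Hpf i).
  by exists (st_t (A (c i.+1))); split; [apply: (seg_tgt (Hpf i)) | apply: seg_src (Hpf i.+1)].
- by rewrite -c0; apply: seg_src (Hpf 0).
- move=> cc Ecc; exists (fun i => st_t (A (c i.+1))).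
  split=> [i|]; first by apply: (seg_tgt (Hpf i)).
  apply: (@chain_sources_converge cc (fun i => c i.+1)) => [n|n|y Hy] //=.
    by have := proj2 (Hc n.+1); rewrite Ecc.
  case: (classic (lt y a)) => Hya; first by exists 0; apply: (lt_trans Hwo) Hya _; rewrite -c0.
  by exists (g y); apply: Hcof; split; [apply: (nlt_lte Hwo) | rewrite Ecc].
- by move=> y Hy /=; apply: seg_def (Hpf _) _ (Hidx y Hy).
- move=> [|i q] //= Hq; have [y [Hy <-]] := seg_sur (Hpf i) Hq.
  exists y; split; first exact: Hblock Hy.
  by rewrite (chain_block_unique Hwo c_incr (Hidx y (Hblock _ _ Hy)) Hy).
- move=> x y Hx Hy; move: (idx x) (idx y) (Hidx x Hx) (Hidx y Hy) => i j Hi Hj /=.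
  case: (ltngtP i j) => [Hij|Hji|Eij].
  + by split=> _; [left | apply: (chain_block_lt Hwo c_incr) Hij Hi Hj].
  + split=> [Hxy|[//|[Eij _]]]; last by move: Hji; rewrite Eij ltnn.
    by case: (lt_lte_asym Hwo Hxy); left; apply: (chain_block_lt Hwo c_incr) Hji Hj Hi.
  + subst j; rewrite (seg_ord (Hpf i) Hi Hj).
    by split=> [H|[//|[_ H]]] //; right.
- by move=> x phi Hx /=; apply: seg_den (Hpf _) _ _ (Hidx x Hx).
Qed.

Lemma denotes_seg_exists (g : I -> nat) : (forall x y, g x = g y -> x = y) ->
  forall b a, below lt a b -> exists psi f, denotes_seg a b psi f.
Proof.
move=> ginj b; elim/(well_founded_ind (bound_lt_wf Hwo)): b => b IHb a Hab.
case: (classic (exists2 m, inseg lt a b m & forall x, inseg lt a b x -> lte lt x m)).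
  move=> [m Hm Hmax]; case: (proj1 Hm) => [Ham|Eam].
    have [psi [f S]] := IHb (Some m) (proj2 Hm) a Ham.
    by eexists; eexists; apply: denotes_seg_snoc S.
  by subst m; eexists; eexists; apply: denotes_seg_single.
move=> Hnomax; apply: (denotes_seg_limit ginj Hab) => [m Hm|c Hc a' Ha'].
  apply: NNPP => Hno; apply: Hnomax; exists m => // x Hx.
  by apply: (nlt_lte Hwo) => Hmx; apply: Hno; exists x.
exact: IHb (Some c) (proj2 Hc) a' Ha'.
Qed.

End Denotation.

Theorem mainTheorem3
  (F : finType) (arF : F -> nat) (Rl : Type) (rvars : Rl -> seq nat)
  (lhs rhs : Rl -> tree (F + nat))
  (HT : wf_trs arF rvars lhs rhs)
  (I : Type) (lt : I -> I -> Prop) (t0 : term F) (A : I -> step F Rl)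
  (HA : is_redseq arF lhs rhs lt t0 A)
  (Hcount : countable_type I) :
  exists psi : sn_pt F Rl,
    stepwise_or_normal arF rvars lhs rhs psi /\
    denotes arF rvars lhs rhs psi lt t0 A.
Proof.
case: (classic (inhabited I)) => [[x]|HI]; last first.
  exists (NF _ t0); split; first by case: HA => -[].
  by split=> // y; apply: HI.
have [[Hwo _] _ Hleast _ _] := HA.
have [a0 Ha0] := exists_least Hwo x.
have [g ginj] := Hcount.
have [psi [f S]] := denotes_seg_exists HT HA ginj (Logic.I : below lt a0 None).
have Hall y : inseg lt a0 None y by split=> //; apply: (nlt_lte Hwo); apply: Ha0.
exists (SW psi); split; first exact: seg_stepwise S.
split; first by rewrite -(Hleast _ Ha0); apply: seg_src S.
exists f; split=> [y|q /(seg_sur S) [y [_ <-]]|y z|y phi].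
- exact: seg_def S _ (Hall y).
- by exists y.
- exact: seg_ord S _ _ (Hall y) (Hall z).
- exact: seg_den S _ _ (Hall y).
Qed.
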